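(* Let $n,k$ be positive integers, $m=kn+1$, $\delta=\frac{(m-1)(n-1)}2$, let $\Delta$ be a zero-normalized $\Gamma_{m,n}$-semimodule and $D=D(\Delta)$. Then $\mathrm{bounce}(G_{kn+1}(D))=\delta-|D|$.
   Context: $\Gamma_{m,n}=\{am+bn:a,b\in\mathbb{Z}_{\ge0}\}$. A $\Gamma_{m,n}$-semimodule is $\Delta\subset\mathbb{Z}_{\ge0}$ with $\Delta+\Gamma_{m,n}\subset\Delta$; zero-normalized means $\min\Delta=0$. Label the box with lower-left corner $(x,y)$, $x,y\in\mathbb{Z}_{\ge0}$, of the positive quadrant by $mn-m(1+x)-n(1+y)$; $D(\Delta)$ is the set of boxes whose labels lie in $\Delta\setminus\Gamma_{m,n}$ (a Young diagram in the width-$m$, height-$n$ rectangle below its diagonal). Let $a_0<a_1<\dots<a_{m-1}$ be the $m$-generators of $\Delta$ (elements $a\in\Delta$ with $a-m\notin\Delta$) and $g(x)=\#(([x,x+n)\cap\mathbb{Z})\setminus\Delta)$; then $g(a_0)\ge\dots\ge g(a_{m-1})$, and $G_{kn+1}(D)$ is the Young diagram whose column heights are $g(a_0),\dots,g(a_{m-1})$ (columns indexed $0,\dots,m-1$ from west to east, drawn in the rectangle with southwest corner $(0,0)$). Loehr's bounce path of a diagram $E$ in this rectangle: start at $(x_0,y_0)=(0,n)$; for $i=0,1,2,\dots$, from $(x_i,y_i)$ step south to $(x_i,y_i')$ where $y_i'$ is the height of column $x_i$ of $E$ (so the path stays outside $E$; this is the vertical step $v_i=y_i-y_i'$), then step east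 by $h_i=v_i+v_{i-1}+\dots+v_{i-k+1}$ (omitting terms with negative index) to $(x_{i+1},y_{i+1})=(x_i+h_i,y_i')$; stop after the south step that reaches height $0$. Then $\mathrm{bounce}(E)$ is the sum of the heights $y_i'$ of all southwest corners reached, i.e. $\sum_i\big(n-\sum_{j\le i}v_j\big)$. *)

From mathcomp Require Import all_boot all_order all_algebra.
Set Implicit Arguments. Unset Strict Implicit. Unset Printing Implicit Defensive.
Import GRing.Theory Num.Theory.

Definition inGamma (m n z : nat) : bool :=
  [exists a : 'I_z.+1, exists b : 'I_z.+1, z == a * m + b * n].

Definition semimodule (m n : nat) (Delta : pred nat) : Prop :=
  forall x, Delta x -> forall a b, Delta (x + a * m + b * n).

(* a is an m-generator: a \in Delta and a - m \notin Delta (a - m < 0 counts as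
   not in Delta) *)
Definition mgen (m : nat) (Delta : pred nat) (a : nat) : bool :=
  Delta a && ~~ ((m <= a) && Delta (a - m)).

Definition gfun (n : nat) (Delta : pred nat) (x : nat) : nat :=
  count (fun y => ~~ Delta y) (iota x n).

(* label of the box with lower-left corner (x,y) *)
Definition label (m n x y : nat) : int :=
  (Posz (m * n) - Posz (m * (1 + x)) - Posz (n * (1 + y)))%R.

Definition inD (m n : nat) (Delta : pred nat) (x y : nat) : bool :=
  let l := label m n x y in
  (0 <= l)%R && Delta `|l|%N && ~~ inGamma m n `|l|%N.

(* |D(Delta)|.  Boxes with x >= n or y >= m have negative label, so counting
   over x, y < m*n (with m >= 2) counts all boxes of D(Delta). *)
Definition Dsize (m n : nat) (Delta : pred nat) : nat :=
  \sum_(x < m * n) \sum_(y < m * n) inD m n Delta x y.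

(* column heights of G_{kn+1}(D): column j (0 <= j < m) has height g(a_j),
   where a_0 < ... < a_{m-1} are the m-generators; columns j >= m are empty *)
Definition Gheight (m n : nat) (Delta : pred nat) (a : nat -> nat) (j : nat) : nat :=
  if j < m then gfun n Delta (a j) else 0.

(* Loehr's bounce path of a diagram with column heights h, starting at (0,n).
   State i = (x_i, y_i, [:: v_{i-1}; v_{i-2}; ...; v_0]). *)
Fixpoint bstate (h : nat -> nat) (n k i : nat) : nat * nat * seq nat :=
  match i with
  | 0 => (0, n, [::])
  | i'.+1 =>
      let: (x, y, vs) := bstate h n k i' in
      let y' := h x in
      let v := y - y' in
      (x + (v + sumn (take k.-1 vs)), y', v :: vs)
  end.

(* y_i' = height reached after the i-th south step = height of column x_i *)
Definition ypr (h : nat -> nat) (n k i : nat) : nat := h (bstate h n k i).1.1.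

(* bounce(E) = b : the path reaches height 0, and the sum of the heights y_i'
   of all corners up to (and including) the first one at height 0 is b.
   (Since the y_i' are nonincreasing, summing up to any N with y_N' = 0 gives
   the same value.) *)
Definition bounce_eq (h : nat -> nat) (n k : nat) (b : int) : Prop :=
  (exists N, ypr h n k N = 0) /\
  (forall N, ypr h n k N = 0 -> Posz (\sum_(i < N) ypr h n k i) = b).

From mathcomp Require Import all_boot all_order all_algebra zify.
Import Order.TTheory GRing.Theory Num.Theory.

(* Write (x_i, y_i) for the corners of the bounce path, so that y_0 = n.  By
   induction, y_(i+1) = g(i n) and x_i is the number of elements of Delta in the
   window [(i - k) n, i n).  As Delta is closed under + m, this window count is
   one less than the number of m-generators up to i n, so a_(x_i) is the largest
   generator below i n.  A non-generator z of Delta has z - 1 = (z - m) + k n in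
   Delta, and g(z - 1) = g(z) because z - 1 + n lies in Delta; hence g is constant
   from a_(x_i) up to i n, and column x_i of G_(kn+1)(D) has height g(i n).  So
   bounce is the sum of the g(i n), i.e. the number of gaps of Delta.  Every gap
   of Gamma_(m,n) is uniquely q n + r with r < n and q < r k; the boxes of D are
   the gaps of Gamma lying in Delta, and Gamma has delta gaps in all. *)

Set Implicit Arguments.
Unset Strict Implicit.
Unset Printing Implicit Defensive.

Lemma count_iota_slide (P : pred nat) x l :
  P x + count P (iota x.+1 l) = count P (iota x l) + P (x + l).
Proof. by have := congr1 (count P) (iotaD x l 1); rewrite addn1 count_cat /= addn0. Qed.

Lemma count_iota_sum (P : pred nat) x l : count P (iota x l) = \sum_(i < l) P (x + i).
Proof.
elim: l => [|l IH]; first by rewrite big_ord0.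
by rewrite -[in LHS]addn1 iotaD count_cat IH big_ord_recr /= addn0.
Qed.

Lemma count_index_iota_cat (P : pred nat) lo mid hi : lo <= mid <= hi ->
  count P (index_iota lo hi) = count P (index_iota lo mid) + count P (index_iota mid hi).
Proof.
case/andP=> lo_mid mid_hi; rewrite /index_iota -count_cat -{2}(subnKC lo_mid) -iotaD.
by congr (count P (iota lo _)); lia.
Qed.

Lemma count_iota_prefix (P : pred nat) M j :
  (forall i j, i <= j < M -> P j -> P i) -> j < M -> P j = (j < count P (iota 0 M)).
Proof.
move=> P_down jM.
rewrite -(subnKC (ltnW jM)) iotaD count_cat add0n -(subnSK jM) /=.
case Pj: (P j).
  have /eqP -> : count P (iota 0 j) == j.
    rewrite -{2}(size_iota 0 j) -all_count; apply/allP => i.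
    by rewrite mem_iota => /andP[_ ij]; apply: (P_down i j) => //; rewrite ltnW.
  by rewrite addnA addn1 ltnS leq_addr.
have /eqP -> : count P (iota j.+1 (M - j.+1)) == 0.
  rewrite -leqn0 leqNgt -has_count; apply/hasP => -[i]; rewrite mem_iota => /andP[ji iM] Pi.
  by rewrite (subnKC jM) in iM; move: Pj; rewrite (P_down j i) ?(ltnW ji) ?iM.
have := count_size P (iota 0 j); rewrite size_iota; lia.
Qed.

Lemma sum_ord_vanishing (F : nat -> nat) A B : A <= B -> (forall i, A <= i -> F i = 0) ->
  \sum_(i < B) F i = \sum_(i < A) F i.
Proof.
move=> AB F0; rewrite -!(big_mkord xpredT) (big_cat_nat (n := A)) //=.
by rewrite [X in _ + X]big1_seq ?addn0 // => i /andP[_]; rewrite mem_index_iota => /andP[/F0].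
Qed.

Section WindowGaps.

Variables (n : nat) (D : pred nat).

Lemma gfun_le x : gfun n D x <= n.
Proof. by rewrite /gfun (leq_trans (count_size _ _)) ?size_iota. Qed.

Lemma gfun_sum x : gfun n D x = \sum_(r < n) ~~ D (x + r).
Proof. exact: count_iota_sum. Qed.

Lemma count_window_gfun x : count D (index_iota x (x + n)) + gfun n D x = n.
Proof. by rewrite /index_iota addKn /gfun -[RHS](size_iota x n) count_predC. Qed.

Lemma gfun_eq0 x r : gfun n D x = 0 -> r < n -> D (x + r).
Proof.
rewrite /gfun => /eqP; rewrite -leqn0 leqNgt -has_count => /hasPn D_win rn.
by apply/negPn/D_win; rewrite mem_iota leq_addr ltn_add2l.
Qed.

Hypothesis D_addn : forall x, D x -> D (x + n).

Lemma gfun_addn x : gfun n D (x + n) <= gfun n D x.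
Proof.
rewrite /gfun addnC iotaDl count_map; apply: sub_count => y /=.
by apply: contra => /D_addn; rewrite addnC.
Qed.

Lemma gfunS x : D x -> gfun n D x.+1 = gfun n D x.
Proof.
move=> Dx; have := count_iota_slide (fun y => ~~ D y) x n.
by rewrite /gfun Dx D_addn // addn0.
Qed.

End WindowGaps.

Section MGenerators.

Variables (m : nat) (D : pred nat).
Hypothesis D_addm : forall x, D x -> D (x + m).

Lemma count_mgen N : count (mgen m D) (iota 0 N) = count D (index_iota (N - m) N).
Proof.
elim: N => [|N IH]; first by rewrite /index_iota.
rewrite -[in LHS]addn1 iotaD count_cat IH /= addn0 /mgen /index_iota.
case: (leqP m N) => [mN | Nm].
  have := count_iota_slide D (N - m) m; rewrite subnK // subSn // subSS subKn //.
  by have := @D_addm (N - m); rewrite subnK //; case: (D (N - m)); case: (D N) => /=; lia.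
have [-> ->] : N - m = 0 /\ N.+1 - m = 0 by split; apply/eqP; rewrite subn_eq0 // ltnW.
by rewrite !subn0 add0n andbT -[in RHS]addn1 iotaD count_cat /= addn0.
Qed.

End MGenerators.

Section IncreasingGenerators.

Variables (m : nat) (D : pred nat) (a : nat -> nat).
Hypothesis a_incr : forall i j, i < j < m -> a i < a j.
Hypothesis a_mgen : forall x, mgen m D x <-> exists2 j, j < m & a j = x.

Lemma a_nondecr i j : i <= j < m -> a i <= a j.
Proof.
case/andP; rewrite leq_eqVlt => /orP[/eqP-> // | ij jm].
by rewrite ltnW // a_incr ?ij.
Qed.

Lemma count_mgen_index N : count (mgen m D) (iota 0 N) = count (fun j => a j < N) (iota 0 m).
Proof.
rewrite -!size_filter -[in RHS](size_map a) -(filter_map a (fun x => x < N)).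
apply/perm_size/uniq_perm; rewrite ?filter_uniq ?iota_uniq //.
- rewrite map_inj_in_uniq ?iota_uniq // => i j; rewrite !mem_iota !add0n /= => im jm /eqP aij.
  apply/eqP; apply: contraTT aij; rewrite !neq_ltn => /orP[ij | ji].
    by rewrite a_incr ?ij ?jm.
  by rewrite (a_incr (i := j)) ?ji ?im ?orbT.
move=> x; rewrite !mem_filter mem_iota add0n /= andbC; apply/andP/andP => -[xN].
  by case/a_mgen => j jm ax; split=> //; rewrite -ax map_f // mem_iota.
by case/mapP=> j; rewrite mem_iota => jm ax; split=> //; apply/a_mgen; exists j.
Qed.

Lemma last_mgen_index N s : count (mgen m D) (iota 0 N.+1) = s.+1 ->
  [/\ s < m, a s <= N & forall z, a s < z <= N -> ~~ mgen m D z].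
Proof.
rewrite count_mgen_index => cnt.
have a_down i j : i <= j < m -> a j < N.+1 -> a i < N.+1.
  by move=> ijm; apply: leq_ltn_trans (a_nondecr ijm).
have sm : s < m by rewrite -cnt (leq_trans (count_size _ _)) ?size_iota.
split=> // [|z /andP[sz zN]]; first by rewrite -ltnS (count_iota_prefix a_down sm) cnt.
apply/negP => /a_mgen[j jm def_z].
have js : j <= s by rewrite -ltnS -cnt -(count_iota_prefix a_down jm) def_z ltnS.
by move: sz; rewrite -def_z ltnNge a_nondecr ?js ?sm.
Qed.

End IncreasingGenerators.

Section BoxCount.

Variables (n k m : nat) (D : pred nat).
Hypothesis m_def : m = k * n + 1.

Lemma inGamma_gap q r : r < n -> q < r * k -> ~~ inGamma m n (q * n + r).
Proof.
move=> rn q_lt; apply/negP => /existsP[u /existsP[v /eqP]].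
move: (nat_of_ord u) (nat_of_ord v) => {u v} u v qr_eq.
have r_le_u : r <= u.
  have := congr1 (modn^~ n) qr_eq; rewrite /= modnMDl modn_small // m_def.
  rewrite (_ : u * (k * n + 1) + v * n = (u * k + v) * n + u) ?modnMDl; last by nia.
  by move=> ->; apply: leq_mod.
nia.
Qed.

Lemma label_lt0 x y : n <= x -> (label m n x y < 0)%R.
Proof. by move=> nx; rewrite /label m_def; nia. Qed.

Lemma inD_rev r y : r < n ->
  inD m n D (n - r.+1) y = (y < r * k) && D ((r * k - y.+1) * n + r).
Proof.
move=> rn; rewrite /inD.
have -> : label m n (n - r.+1) y = (r%:Z + n%:Z * ((r * k)%:Z - y.+1%:Z))%R.
  by rewrite /label m_def; nia.
case: (ltnP y (r * k)) => [y_lt | y_ge].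
  rewrite (_ : (_ + _)%R = Posz ((r * k - y.+1) * n + r)); last by nia.
  by rewrite le0z_nat absz_nat inGamma_gap ?andbT //; lia.
have neg : (r%:Z + n%:Z * ((r * k)%:Z - y.+1%:Z) < 0)%R by nia.
by rewrite leNgt neg.
Qed.

Lemma Dsize_gaps : Dsize m n D = \sum_(r < n) \sum_(q < r * k) D (q * n + r).
Proof.
have m_gt0 : 0 < m by rewrite m_def addn1.
rewrite /Dsize (sum_ord_vanishing (F := fun x => \sum_(y < m * n) inD m n D x y) (A := n));
  last 2 first.
- by rewrite leq_pmull.
- by move=> x nx; rewrite big1 // => y _; rewrite /inD leNgt label_lt0.
rewrite (reindex_inj rev_ord_inj) /=; apply: eq_bigr => r _.
have rn := ltn_ord r.
have rk_le : r * k <= m * n by rewrite m_def; nia.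
rewrite (sum_ord_vanishing (F := inD m n D (n - r.+1)) rk_le); last first.
  by move=> y rk_y; rewrite inD_rev // ltnNge rk_y.
rewrite (reindex_inj rev_ord_inj) /=; apply: eq_bigr => q _.
have q_lt := ltn_ord q.
rewrite inD_rev // (_ : r * k - (r * k - q.+1).+1 = q); last by lia.
by rewrite (_ : r * k - q.+1 < r * k); last by lia.
Qed.

Lemma genus_Gamma : \sum_(r < n) \sum_(q < r * k) 1 = (m.-1 * n.-1) %/ 2.
Proof.
under eq_bigr do rewrite sum1_card card_ord.
rewrite -big_distrl /= -(big_mkord xpredT (fun r => r)) bin2_sum.
have two_bin : n * n.-1 = 2 * 'C(n, 2) by rewrite -mul_bin_diag bin1.
by rewrite m_def addn1 /= -mulnA two_bin mulnCA mulKn // mulnC.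
Qed.

End BoxCount.

Section BounceLevels.

Variables (n k : nat) (D : pred nat).
Hypothesis D_addn : forall x, D x -> D (x + n).

Definition bounce_y i := if i is j.+1 then gfun n D (j * n) else n.

Definition bounce_x i := count D (index_iota ((i - k) * n) (i * n)).

Definition bounce_drops i := [seq bounce_y j - bounce_y j.+1 | j <- rev (iota 0 i)].

Lemma bounce_yS i : bounce_y i.+1 <= bounce_y i.
Proof. by case: i => [|i]; [exact: gfun_le | rewrite /= mulSnr; exact: (gfun_addn D_addn)]. Qed.

Lemma bounce_y_nonincr i j : i <= j -> bounce_y j <= bounce_y i.
Proof.
move/subnKC <-; elim: (j - i) => [|d IH]; first by rewrite addn0.
by rewrite addnS (leq_trans (bounce_yS _)).
Qed.

Lemma bounce_dropsS i : bounce_drops i.+1 = (bounce_y i - bounce_y i.+1) :: bounce_drops i.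
Proof. by rewrite /bounce_drops -[in iota 0 i.+1]addn1 iotaD rev_cat. Qed.

Lemma sumn_take_drops i l : sumn (take l (bounce_drops i)) = bounce_y (i - l) - bounce_y i.
Proof.
elim: i l => [|i IH] [|l]; rewrite ?subnn ?take0 // bounce_dropsS /= IH subSS.
by have := bounce_yS i; have := bounce_y_nonincr (leq_subr l i) => /=; lia.
Qed.

Lemma bounce_xS i : bounce_x i.+1 = bounce_x i + (bounce_y (i.+1 - k) - bounce_y i.+1).
Proof.
rewrite /bounce_x /= mulSnr.
have lo_le : (i - k) * n <= i * n by rewrite leq_mul2r leq_subr orbT.
have split_at_in : count D (index_iota ((i - k) * n) (i * n + n)) =
    count D (index_iota ((i - k) * n) (i * n)) + count D (index_iota (i * n) (i * n + n)).
  by rewrite (count_index_iota_cat _ (mid := i * n)) // lo_le leq_addr.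
have := count_window_gfun n D (i * n).
case: (leqP k i) => [ki | ik]; last first.
  move: split_at_in; have [-> ->] : i.+1 - k = 0 /\ i - k = 0 by lia.
  rewrite /=; lia.
rewrite subSn // mulSnr.
have split_at_lo : count D (index_iota ((i - k) * n) (i * n + n)) =
    count D (index_iota ((i - k) * n) ((i - k) * n + n)) +
    count D (index_iota ((i - k) * n + n) (i * n + n)).
  by rewrite (count_index_iota_cat _ (mid := (i - k) * n + n)) ?leq_addr ?leq_add2r.
have := count_window_gfun n D ((i - k) * n).
have := bounce_y_nonincr (leq_subr k i : (i - k).+1 <= i.+1) => /=.
lia.
Qed.

End BounceLevels.

Section Semimodule.

Variables (n k m : nat) (D : pred nat).
Hypotheses (m_def : m = k * n + 1) (D_semi : semimodule m n D).

Lemma semimodule_addn x : D x -> D (x + n).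
Proof. by move=> Dx; have := D_semi Dx 0 1; rewrite mul0n addn0 mul1n. Qed.

Lemma semimodule_addm x : D x -> D (x + m).
Proof. by move=> Dx; have := D_semi Dx 1 0; rewrite mul0n addn0 mul1n. Qed.

Lemma semimodule_pred_nonmgen x : D x.+1 -> ~~ mgen m D x.+1 -> D x.
Proof.
rewrite /mgen => Dx1; rewrite Dx1 negbK => /andP[mx Dxm].
by have := D_semi Dxm 0 k; rewrite mul0n addn0; congr D; lia.
Qed.

Lemma gfun_nonmgen_segment z N : D N -> z <= N ->
  (forall y, z < y <= N -> ~~ mgen m D y) -> gfun n D z = gfun n D N.
Proof.
elim: N => [|N IH] DN1 zN no_mgen; first by move: zN; rewrite leqn0 => /eqP->.
move: zN; rewrite leq_eqVlt ltnS => /orP[/eqP-> // | zN].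
have DN : D N by apply: semimodule_pred_nonmgen DN1 (no_mgen _ _); rewrite ltnS zN /=.
rewrite (gfunS semimodule_addn DN) IH // => y /andP[zy yN].
by apply: no_mgen; rewrite zy leqW.
Qed.

Hypothesis D0 : D 0.

Lemma semimodule_qnr q r : r * k <= q -> D (q * n + r).
Proof.
move=> rk_q; have := D_semi D0 r (q - r * k).
by rewrite add0n m_def mulnBl; congr D; nia.
Qed.

Lemma gfun_kn_eq0 : gfun n D (k * n * n) = 0.
Proof.
rewrite gfun_sum big1 // => r _.
by rewrite semimodule_qnr // mulnC leq_mul2l ltnW ?orbT.
Qed.

Lemma sum_gfun_gaps N : gfun n D (N * n) = 0 ->
  \sum_(i < N) gfun n D (i * n) = \sum_(r < n) \sum_(q < r * k) ~~ D (q * n + r).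
Proof.
move=> gN0; under eq_bigr do rewrite gfun_sum.
rewrite exchange_big; apply: eq_bigr => r _.
have F0 i : minn N (r * k) <= i -> ~~ D (i * n + r) = 0 :> nat.
  rewrite geq_min => /orP[Ni | rk_i]; last by rewrite semimodule_qnr.
  have gi0 : gfun n D (i * n) = 0.
    by apply/eqP; rewrite -leqn0 -gN0 (bounce_y_nonincr semimodule_addn (Ni : N.+1 <= i.+1)).
  by rewrite (gfun_eq0 gi0 (ltn_ord r)).
by rewrite (sum_ord_vanishing (geq_minl N _) F0) (sum_ord_vanishing (geq_minr _ _) F0).
Qed.

Section Columns.

Variable a : nat -> nat.
Hypothesis a_incr : forall i j, i < j < m -> a i < a j.
Hypothesis a_mgen : forall x, mgen m D x <-> exists2 j, j < m & a j = x.

Lemma gfun_mgen_index N : D N ->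
  let s := count D (index_iota (N - k * n) N) in s < m /\ gfun n D (a s) = gfun n D N.
Proof.
move=> DN s; have cnt : count (mgen m D) (iota 0 N.+1) = s.+1.
  rewrite (count_mgen semimodule_addm) m_def addn1 subSS.
  rewrite (count_index_iota_cat _ (mid := N)) ?leq_subr ?leqnSn //.
  by rewrite /index_iota subSnn /= DN addn1.
have [sm as_N no_mgen] := last_mgen_index a_incr a_mgen cnt.
by split; last exact: gfun_nonmgen_segment.
Qed.

Lemma Gheight_bounce_x i : Gheight m n D a (bounce_x n k D i) = bounce_y n D i.+1.
Proof.
have D_in : D (i * n) by have := D_semi D0 0 i; rewrite mul0n.
have [x_lt_m g_eq] := gfun_mgen_index D_in.
by rewrite /Gheight /bounce_x mulnBl x_lt_m g_eq.
Qed.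

Hypothesis k_gt0 : 0 < k.

Lemma bstateE i :
  bstate (Gheight m n D a) n k i = (bounce_x n k D i, bounce_y n D i, bounce_drops n D i).
Proof.
elim: i => [|i /= ->]; first by rewrite /bounce_x /index_iota mul0n.
rewrite Gheight_bounce_x (sumn_take_drops semimodule_addn) (bounce_xS _ semimodule_addn).
rewrite bounce_dropsS; congr (_ + _, _, _).
have := bounce_yS semimodule_addn i; have := bounce_y_nonincr semimodule_addn (leq_subr k.-1 i).
by rewrite (_ : i - k.-1 = i.+1 - k); lia.
Qed.

Lemma yprE i : ypr (Gheight m n D a) n k i = gfun n D (i * n).
Proof. by rewrite /ypr bstateE Gheight_bounce_x. Qed.

End Columns.

End Semimodule.

Theorem mainTheorem17 (n k m : nat) (Delta : pred nat) (a : nat -> nat) :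
  0 < n -> 0 < k -> m = k * n + 1 ->
  semimodule m n Delta -> Delta 0 ->
  (forall i j, i < j < m -> a i < a j) ->
  (forall x, mgen m Delta x <-> exists2 j, j < m & a j = x) ->
  bounce_eq (Gheight m n Delta a) n k
    (Posz ((m.-1 * n.-1) %/ 2) - Posz (Dsize m n Delta))%R.
Proof.
move=> _ k_gt0 m_def D_semi D0 a_incr a_mgen.
have ypr_gfun := yprE m_def D_semi D0 a_incr a_mgen k_gt0.
split=> [|N]; first by exists (k * n); rewrite ypr_gfun (gfun_kn_eq0 m_def D_semi D0).
rewrite ypr_gfun => gN0; under eq_bigr do rewrite ypr_gfun.
rewrite (sum_gfun_gaps m_def D_semi D0 gN0) (Dsize_gaps _ m_def) -(genus_Gamma m_def).
have -> : \sum_(r < n) \sum_(q < r * k) 1 = \sum_(r < n) \sum_(q < r * k) ~~ Delta (q * n + r)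
    + \sum_(r < n) \sum_(q < r * k) Delta (q * n + r).
  rewrite -big_split; apply: eq_bigr => r _.
  by rewrite -big_split; apply: eq_bigr => q _; case: (Delta _).
by rewrite PoszD addrK.
Qed.
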